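(* The assignment sending a pair of slices $(X,Y)$ to the presheaf $(X\wedge Y)(-)$ and a pair of morphisms $(S,T):(X,Y)\to(X',Y')$ of $\mathsf{Slice}$ to the natural transformation $S\wedge T:=(S\wedge Y')\circ(X\wedge T)$ (whose component at $Z$ is $C\mapsto C\cap T\cap S$) is a functor $\mathsf{Slice}\times\mathsf{Slice}\to[\mathsf{Slice}^{op},\mathsf{Set}]$.
   Context: Fix a connected, time-orientable Lorentzian manifold $\mathcal{M}$ with a fixed time-orientation (no further causality assumptions). A causal curve is an equivalence class, up to monotone reparametrisation, of smooth regular paths $\mu:\iota\to\mathcal{M}$ ($\iota\subseteq\mathbb{R}$ an interval) whose tangent is everywhere timelike or null; it is future-directed if the tangent is everywhere future-directed. Write $x\prec y$ if $x=y$ or there is a future-directed causal curve from $x$ to $y$. A region $A\subseteq\mathcal{M}$ is spacelike if no two distinct points $x,y\in A$ satisfy $x\prec y$. A slice is a closed spacelike subset of $\mathcal{M}$. For regions $A,B$, $\mathcal{C}[A,B]$ is the set of future-directed causal curves passing through $A$ and then $B$: for a representative path $\mu:\iota\to\mathcal{M}$, there exists $q\in\iota$ with $\mu(q)\in B$, and for every such $q$ there exists $p\le q$ with $\mu(p)\in A$. The category $\mathsf{Slice}$ has slices as objects, $\mathsf{Slice}(X,Y)=\mathcal{P}(\mathcal{C}[X,Y])$ (the powerset), composition $T\circ S:=T\cap S$, identities $1_X=\mathcal{C}[X,X]$. For slices $X,Y$, $(X\wedge Y)(-):\mathsf{Slice}^{op}\to\mathsf{Set}$ is the presheaf $(X\wedge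 Y)(Z):=\mathcal{P}(\mathcal{C}[Z,X]\cap\mathcal{C}[Z,Y])$, $(X\wedge Y)(U:Z'\to Z):C\mapsto C\cap U$. For $S:X\to X'$ and $T:Y\to Y'$, $(S\wedge Y)$ is the natural transformation $(X\wedge Y)(-)\Rightarrow(X'\wedge Y)(-)$ with components $C\mapsto C\cap S$, and $(X\wedge T):(X\wedge Y)(-)\Rightarrow(X\wedge Y')(-)$ has components $C\mapsto C\cap T$. *)

From HB Require Import structures.
From mathcomp Require Import all_boot all_order all_algebra.
From mathcomp Require Import all_classical all_reals topology.
Set Implicit Arguments. Unset Strict Implicit. Unset Printing Implicit Defensive.
Import Order.TTheory GRing.Theory Num.Theory.
Local Open Scope classical_set_scope.
Local Open Scope ring_scope.

(* Abstract causal setting: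
   [causal mu iota] means: the path mu restricted to the interval iota is a
   smooth regular path whose tangent is everywhere future-directed timelike
   or null (a representative of a future-directed causal curve). *)

Definition is_itv (R : realType) (I : set R) : Prop :=
  forall x y z : R, I x -> I z -> x <= y -> y <= z -> I y.

Section Causal.
Variables (R : realType) (M : topologicalType)
          (causal : (R -> M) -> set R -> Prop).

Record curve := Curve {
  cpath : R -> M;
  cdom : set R;
  cdom_itv : is_itv cdom;
  ccausal : causal cpath cdom }.

Definition cprec (x y : M) : Prop :=
  x = y \/ exists c : curve, exists p q : R,
    [/\ cdom c p, cdom c q, p <= q, cpath c p = x & cpath c q = y].

Definition spacelike (A : set M) : Prop :=
  forall x y, A x -> A y -> x <> y -> ~ cprec x y.

Definition slice (X : set M) : Prop := closed X /\ spacelike X.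

Definition Ccurves (A B : set M) : set curve :=
  [set c | (exists q, cdom c q /\ B (cpath c q)) /\
           (forall q, cdom c q -> B (cpath c q) ->
              exists p, [/\ cdom c p, p <= q & A (cpath c p)])].

Definition smor (X Y : set M) (S : set curve) : Prop := S `<=` Ccurves X Y.
Definition sid (X : set M) : set curve := Ccurves X X.
Definition scomp (T S : set curve) : set curve := T `&` S.

Definition wedge_ob (X Y Z : set M) (C : set curve) : Prop :=
  C `<=` Ccurves Z X `&` Ccurves Z Y.
Definition wedge_act (U C : set curve) : set curve := C `&` U.
Definition wedge_mor (S T C : set curve) : set curve := (C `&` T) `&` S.

End Causal.

From mathcomp Require Import all_boot all_order all_algebra.
From mathcomp Require Import all_classical all_reals topology.
Local Open Scope classical_set_scope.

(* Everything rests on two properties of the curve sets C[A,B]: they compose,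
   C[A,B] ∩ C[B,D] ⊆ C[A,D] (walk back from a hit of D to a hit of B, then to
   a hit of A), and C[A,B] is contained in both C[A,A] and C[B,B].  The functor
   laws are then intersection algebra. *)

Section WedgeFunctor.
Variables (R : realType) (M : topologicalType) (causal : (R -> M) -> set R -> Prop).
Implicit Types (A B D X Y Z : set M) (c : curve causal) (S T U C : set (curve causal)).

Lemma Ccurves_trans A B D c : Ccurves A B c -> Ccurves B D c -> Ccurves A D c.
Proof.
move=> [_ hitA] [[q [dq Dq]] hitB]; split; first by exists q.
move=> q' dq' Dq'; have [p [dp le_pq' Bp]] := hitB q' dq' Dq'.
have [p' [dp' le_p'p Ap']] := hitA p dp Bp.
by exists p'; split => //; apply: Order.POrderTheory.le_trans le_pq'.
Qed.

Lemma Ccurves_sub_idl A B :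
  Ccurves (causal := causal) A B `<=` Ccurves (causal := causal) A A.
Proof.
move=> c [[q [dq Bq]] hitA]; have [p [dp _ Ap]] := hitA q dq Bq.
by split; [exists p | move=> q' dq' Aq'; exists q'].
Qed.

Lemma Ccurves_sub_idr A B : Ccurves (causal := causal) A B `<=` Ccurves B B.
Proof. by move=> c [[q [dq Bq]] _]; split; [exists q | move=> q' dq' Bq'; exists q']. Qed.

Lemma wedge_ob_act X Y Z Z' U C :
  smor Z' Z U -> wedge_ob X Y Z C -> wedge_ob X Y Z' (wedge_act U C).
Proof.
move=> sUZ sC c [Cc Uc]; have [cZX cZY] := sC c Cc.
by split; apply: Ccurves_trans (sUZ c Uc) _.
Qed.

Lemma wedge_act_id X Y Z C : wedge_ob X Y Z C -> wedge_act (sid Z) C = C.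
Proof. by move=> sC; apply/setIidl => c /sC[/Ccurves_sub_idl]. Qed.

Lemma wedge_act_comp U U' C :
  wedge_act (scomp U U') C = wedge_act U' (wedge_act U C).
Proof. exact: setIA. Qed.

Lemma wedge_ob_mor X Y X' Y' Z S T C :
  smor X X' S -> smor Y Y' T -> wedge_ob X Y Z C ->
  wedge_ob X' Y' Z (wedge_mor S T C).
Proof.
move=> sS sT sC c [[Cc Tc] Sc]; have [cZX cZY] := sC c Cc.
by split; [apply: Ccurves_trans cZX (sS c Sc) | apply: Ccurves_trans cZY (sT c Tc)].
Qed.

Lemma wedge_act_mor S T U C :
  wedge_act U (wedge_mor S T C) = wedge_mor S T (wedge_act U C).
Proof. by rewrite /wedge_act /wedge_mor; apply/seteqP; split => c /=; tauto. Qed.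

Lemma wedge_mor_id X Y Z C : wedge_ob X Y Z C -> wedge_mor (sid X) (sid Y) C = C.
Proof.
move=> sC; have CsubX : C `<=` sid X by move=> c /sC[/Ccurves_sub_idr].
have CsubY : C `<=` sid Y by move=> c /sC[_ /Ccurves_sub_idr].
by rewrite /wedge_mor !setIidl.
Qed.

Lemma wedge_mor_comp S T S' T' C :
  wedge_mor (scomp S' S) (scomp T' T) C = wedge_mor S' T' (wedge_mor S T C).
Proof. by rewrite /wedge_mor /scomp; apply/seteqP; split => c /=; tauto. Qed.

End WedgeFunctor.

Theorem mainTheorem6 (R : realType) (M : topologicalType)
    (causal : (R -> M) -> set R -> Prop) :
  (* object part: (X /\ Y)(-) is a presheaf on Slice *)
  (forall (X Y Z Z' : set M) (U C : set (curve causal)),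
      slice causal X -> slice causal Y -> slice causal Z -> slice causal Z' ->
      smor Z' Z U -> wedge_ob X Y Z C -> wedge_ob X Y Z' (wedge_act U C)) /\
  (forall (X Y Z : set M) (C : set (curve causal)),
      slice causal X -> slice causal Y -> slice causal Z ->
      wedge_ob X Y Z C -> wedge_act (sid Z) C = C) /\
  (forall (X Y Z Z' Z'' : set M) (U U' C : set (curve causal)),
      slice causal X -> slice causal Y -> slice causal Z -> slice causal Z' -> slice causal Z'' ->
      smor Z' Z U -> smor Z'' Z' U' -> wedge_ob X Y Z C ->
      wedge_act (scomp U U') C = wedge_act U' (wedge_act U C)) /\
  (* morphism part: S /\ T is a natural transformation
     (X /\ Y)(-) => (X' /\ Y')(-) *)
  (forall (X Y X' Y' Z : set M) (S T C : set (curve causal)),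
      slice causal X -> slice causal Y -> slice causal X' -> slice causal Y' -> slice causal Z ->
      smor X X' S -> smor Y Y' T -> wedge_ob X Y Z C ->
      wedge_ob X' Y' Z (wedge_mor S T C)) /\
  (forall (X Y X' Y' Z Z' : set M) (S T U C : set (curve causal)),
      slice causal X -> slice causal Y -> slice causal X' -> slice causal Y' -> slice causal Z -> slice causal Z' ->
      smor X X' S -> smor Y Y' T -> smor Z' Z U -> wedge_ob X Y Z C ->
      wedge_act U (wedge_mor S T C) = wedge_mor S T (wedge_act U C)) /\
  (* preservation of identities *)
  (forall (X Y Z : set M) (C : set (curve causal)),
      slice causal X -> slice causal Y -> slice causal Z -> wedge_ob X Y Z C ->
      wedge_mor (sid X) (sid Y) C = C) /\
  (* preservation of composition *)
  (forall (X Y X' Y' X'' Y'' Z : set M) (S T S' T' C : set (curve causal)),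
      slice causal X -> slice causal Y -> slice causal X' -> slice causal Y' -> slice causal X'' -> slice causal Y'' ->
      slice causal Z ->
      smor X X' S -> smor Y Y' T -> smor X' X'' S' -> smor Y' Y'' T' ->
      wedge_ob X Y Z C ->
      wedge_mor (scomp S' S) (scomp T' T) C = wedge_mor S' T' (wedge_mor S T C)).
Proof.
split; [|split; [|split; [|split; [|split; [|split]]]]].
- by move=> X Y Z Z' U C _ _ _ _; apply: wedge_ob_act.
- by move=> X Y Z C _ _ _; apply: wedge_act_id.
- by move=> *; apply: wedge_act_comp.
- by move=> X Y X' Y' Z S T C _ _ _ _ _; apply: wedge_ob_mor.
- by move=> *; apply: wedge_act_mor.
- by move=> X Y Z C _ _ _; apply: wedge_mor_id.
- by move=> *; apply: wedge_mor_comp.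
Qed.
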